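(* Let $G$ be a finite simple graph and suppose the automorphism group $\mathrm{Aut}(G)$ contains an element $\sigma$ of order $2$ such that, for every $v\in V(G)$, $\sigma(v)\neq v$ and $v\sigma(v)\notin E(G)$. Then $G$ is a $\mathcal{P}$ position for Grim.
   Context: Grim is a two-player game on a finite simple undirected graph. Any isolated vertices of the starting graph are deleted before play begins. Players alternate moves; a move consists of selecting a vertex of the current graph and deleting it together with all its incident edges, after which every vertex that has become isolated is also deleted. The player who makes the last legal move wins (a player facing the empty graph has no move and loses). A graph is an $\mathcal{N}$ position if the player about to move has a winning strategy, and a $\mathcal{P}$ position otherwise. An automorphism of $G$ is a permutation of $V(G)$ preserving adjacency. *)

From mathcomp Require Import all_boot all_fingroup.
Set Implicit Arguments. Unset Strict Implicit. Unset Printing Implicit Defensive.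

Definition simple_graph (T : finType) (e : rel T) : Prop :=
  symmetric e /\ irreflexive e.

(* Every Grim position reachable from G is the induced subgraph of G on a
   vertex set S; we represent positions by such sets S : {set T}. *)

Definition drop_isolated (T : finType) (e : rel T) (S : {set T}) : {set T} :=
  [set v in S | [exists u in S, e v u]].

Definition grim_start (T : finType) (e : rel T) : {set T} :=
  drop_isolated e [set: T].

Definition grim_move (T : finType) (e : rel T) (S : {set T}) (v : T) : {set T} :=
  drop_isolated e (S :\ v).

(* N-position test with fuel; the fuel #|S| suffices since every move
   strictly decreases the number of vertices. *)
Fixpoint grim_N_fuel (T : finType) (e : rel T) (n : nat) (S : {set T}) : bool :=
  match n with
  | 0 => false
  | n'.+1 => [exists v in S, ~~ grim_N_fuel e n' (grim_move e S v)]
  end.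

(* S is an N-position iff the player to move has a winning strategy
   (last player to move wins). *)
Definition grim_N (T : finType) (e : rel T) (S : {set T}) : bool :=
  grim_N_fuel e #|S| S.

Definition grim_P_graph (T : finType) (e : rel T) : Prop :=
  ~~ grim_N e (grim_start e).

Definition graph_aut (T : finType) (e : rel T) (sigma : {perm T}) : Prop :=
  forall x y, e (sigma x) (sigma y) = e x y.

From mathcomp Require Import all_boot all_fingroup.
From mathcomp Require Import zify.

Set Implicit Arguments.
Unset Strict Implicit.
Unset Printing Implicit Defensive.

(* Mirror strategy: the second player answers every move v by sigma v.
   If the position S is sigma-stable and has no isolated vertex, then
   sigma v survives the move v, because its neighbours lie in S and none
   of them is v; and the position reached after both moves is again
   sigma-stable without isolated vertices.  So the second player always
   has a reply, and the player to move from such a position loses. *)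

Section DropIsolated.

Variables (T : finType) (e : rel T).
Hypothesis e_sym : symmetric e.

Local Notation drop := (drop_isolated e).

Lemma mem_drop_isolated (A : {set T}) x :
  (x \in drop A) = (x \in A) && [exists u in A, e x u].
Proof. by rewrite inE. Qed.

Lemma drop_isolated_sub (A : {set T}) : drop A \subset A.
Proof. by apply/subsetP=> x; rewrite mem_drop_isolated => /andP[]. Qed.

Lemma drop_isolated_neighbour (A : {set T}) x u :
  x \in A -> u \in A -> e x u -> u \in drop A.
Proof.
move=> xA uA xu; rewrite mem_drop_isolated uA.
by apply/existsP; exists x; rewrite xA e_sym.
Qed.

Lemma drop_isolatedK (A : {set T}) : drop (drop A) = drop A.
Proof.
apply/setP=> x; rewrite [x \in drop (drop A)]mem_drop_isolated.
apply/andb_idr; rewrite mem_drop_isolated => /andP[xA /existsP[u /andP[uA xu]]].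
by apply/existsP; exists u; rewrite xu (drop_isolated_neighbour xA uA xu).
Qed.

Lemma drop_isolated_setD1 (A : {set T}) w : drop (drop A :\ w) = drop (A :\ w).
Proof.
apply/setP=> x; rewrite !mem_drop_isolated !in_setD1 mem_drop_isolated.
apply/idP/idP.
  case/andP=> /and3P[-> -> _] /existsP[u /andP[uA xu]].
  apply/existsP; exists u; rewrite xu andbT.
  by move: uA; rewrite !in_setD1 mem_drop_isolated => /and3P[-> ->].
case/andP=> /andP[-> xA] /existsP[u /andP[/setD1P[uw uA] xu]].
rewrite xA; apply/andP; split; apply/existsP; exists u; first by rewrite uA.
by rewrite xu in_setD1 uw (drop_isolated_neighbour xA uA xu).
Qed.

End DropIsolated.

Section Mirror.

Variables (T : finType) (e : rel T) (sigma : {perm T}).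
Hypothesis e_sym : symmetric e.
Hypothesis sigma_aut : graph_aut e sigma.
Hypothesis sigmaK : involutive sigma.
Hypothesis sigma_free : forall v, sigma v != v /\ ~~ e v (sigma v).

Definition sigma_stable (S : {set T}) := {in S, forall x, sigma x \in S}.

Lemma drop_isolated_stable (A : {set T}) :
  sigma_stable A -> sigma_stable (drop_isolated e A).
Proof.
move=> stA x; rewrite !mem_drop_isolated => /andP[xA /existsP[u /andP[uA xu]]].
by rewrite stA //=; apply/existsP; exists (sigma u); rewrite stA //= sigma_aut.
Qed.

Lemma setD_orbit_stable (S : {set T}) v :
  sigma_stable S -> sigma_stable (S :\ v :\ sigma v).
Proof.
move=> stS x /setD1P[xsv /setD1P[xv xS]].
rewrite !in_setD1 stS // (inj_eq perm_inj) xv andbT.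
by apply: contra xsv => /eqP <-; rewrite sigmaK.
Qed.

Lemma mirror_reply_legal (S : {set T}) v :
  sigma_stable S -> drop_isolated e S = S -> v \in S ->
  sigma v \in grim_move e S v.
Proof.
move=> stS dropS vS; have [sv_v no_e] := sigma_free v.
have svS := stS v vS.
rewrite mem_drop_isolated in_setD1 sv_v svS /=.
move: svS; rewrite -{1}dropS mem_drop_isolated => /andP[_ /existsP[u /andP[uS su]]].
apply/existsP; exists u; rewrite in_setD1 uS su !andbT.
by apply: contraNneq no_e => uv; rewrite e_sym -[X in e _ X]uv.
Qed.

Lemma mirror_position_P n (S : {set T}) :
  #|S| <= n -> sigma_stable S -> drop_isolated e S = S -> ~~ grim_N_fuel e n S.
Proof.
elim/ltn_ind: n S => -[|m] IH S cardS stS dropS //=.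
apply/existsP=> -[v /andP[vS /negP]]; apply.
have [sv_v _] := sigma_free v.
have svS := stS v vS.
have card2 : 2 <= #|S|.
  by rewrite (cardsD1 v) vS (cardsD1 (sigma v)) in_setD1 sv_v svS.
case: m IH cardS => [|k] IH cardS /=; first lia.
apply/existsP; exists (sigma v); rewrite mirror_reply_legal //=.
rewrite /grim_move drop_isolated_setD1 //; apply: IH => //.
- apply: leq_trans (subset_leq_card (drop_isolated_sub _ _)) _.
  move: cardS; rewrite (cardsD1 v S) (cardsD1 (sigma v) (S :\ v)).
  by rewrite vS in_setD1 sv_v svS; lia.
- exact/drop_isolated_stable/setD_orbit_stable.
- exact: drop_isolatedK.
Qed.

End Mirror.

Lemma perm_order2K (T : finType) (sigma : {perm T}) :
  #[sigma]%g = 2 -> involutive sigma.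
Proof.
move=> ord2 v; have := expg_order sigma; rewrite ord2 expgS expg1 => sigma2.
by rewrite -permM sigma2 perm1.
Qed.

Theorem theorem4p2 (T : finType) (e : rel T) (sigma : {perm T}) :
  simple_graph e ->
  graph_aut e sigma ->
  #[sigma]%g = 2 ->
  (forall v : T, sigma v != v /\ ~~ e v (sigma v)) ->
  grim_P_graph e.
Proof.
move=> [e_sym _] sigma_aut /perm_order2K sigmaK sigma_free.
apply: (mirror_position_P e_sym sigma_aut sigmaK sigma_free) => //.
- by apply: drop_isolated_stable => // x; rewrite inE.
- exact: drop_isolatedK.
Qed.
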